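(* Let $G_*$ be a crossed simplicial group with structural short exact sequence $1 \to P_* \to G_* \xrightarrow{\pi} N_* \to 1$, and let $\Gamma_n = G_n/\!\!/P_n$ be the action groupoids. For $0\le i\le n$ define $s_i\colon\Gamma_n\to\Gamma_{n+1}$ and $d_i\colon\Gamma_n\to\Gamma_{n-1}$ by $$s_i[\sigma,f]=[s_i(\sigma),\, s_{\sigma^{-1}(i)}(f^{-1})^{-1}],\qquad d_i[\sigma,f]=[d_i(\sigma),\, d_{\sigma^{-1}(i)}(f^{-1})^{-1}].$$ Then these maps are functors of groupoids and make $\{\Gamma_n\}_{n\ge0}$ a simplicial groupoid, i.e. they satisfy the simplicial identities.
   Context: A crossed simplicial group $G_*$ consists of groups $G_n$ ($n\ge0$), a left action of $G_n$ on $[n]=\{0,\dots,n\}$, and maps $d_i\colon G_n\to G_{n-1}$, $s_i\colon G_n\to G_{n+1}$ making $G_*$ a simplicial set, such that $d_i(gh)=d_i(g)d_{g^{-1}(i)}(h)$ and $s_i(gh)=s_i(g)s_{g^{-1}(i)}(h)$. Every crossed simplicial group fits into a canonical (structural) short exact sequence of crossed simplicial groups $1\to P_*\to G_*\xrightarrow{\pi}N_*\to1$, where $P_*$ is a simplicial group acting trivially on each $[n]$ (so the action of $G_n$ on $[n]$ factors through $N_n$) and $N_*$ is one of seven specific crossed simplicial groups. The action groupoid $\Gamma_n=G_n/\!\!/P_n$ has as objects the elements $\sigma$ of $G_n/P_n=N_n$, and a morphism $\sigma\to\sigma\pi(f)^{-1}$ for each $f\in G_n$, written $[\sigma,f]$;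 composition is $[\sigma\pi(f)^{-1},g]\cdot[\sigma,f]=[\sigma,gf]$. In the formulas, $s_i(\sigma), d_i(\sigma)$ are computed in $N_*$, $\sigma^{-1}(i)$ uses the action of $N_n$ on $[n]$, and the outer $s_j, d_j$ on $f^{-1}$ are those of $G_*$. *)

(* Groups G_n may be infinite, so we use MathComp's
   (not necessarily finite) [groupType] from boot/monoid.v. *)
From mathcomp Require Import all_boot.

Set Implicit Arguments.
Unset Strict Implicit.
Unset Printing Implicit Defensive.

Local Open Scope group_scope.

(* Indices are natural numbers; values for out-of-range indices are
   unconstrained junk and never used. *)

Record simplicial_identities (X : nat -> Type)
    (face : forall n, nat -> X n.+1 -> X n)
    (degen : forall n, nat -> X n -> X n.+1) : Prop := SimplicialIdentities {
  si_dd : forall n i j (x : X n.+2), i < j -> j <= n.+2 ->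
    face n i (face n.+1 j x) = face n j.-1 (face n.+1 i x);
  si_ss : forall n i j (x : X n), i <= j -> j <= n ->
    degen n.+1 i (degen n j x) = degen n.+1 j.+1 (degen n i x);
  si_ds_lt : forall n i j (x : X n.+1), i < j -> j <= n.+1 ->
    face n.+1 i (degen n.+1 j x) = degen n j.-1 (face n i x);
  si_ds_eq : forall n j (x : X n), j <= n -> face n j (degen n j x) = x;
  si_ds_eqS : forall n j (x : X n), j <= n -> face n j.+1 (degen n j x) = x;
  si_ds_gt : forall n i j (x : X n.+1), j.+1 < i -> i <= n.+2 ->
    face n.+1 i (degen n.+1 j x) = degen n j (face n i.-1 x)
}.

Record crossed_simplicial_group (G : nat -> groupType)
    (act : forall n, G n -> 'I_n.+1 -> 'I_n.+1)
    (face : forall n, nat -> G n.+1 -> G n)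
    (degen : forall n, nat -> G n -> G n.+1) : Prop := CrossedSimplicialGroup {
  csg_act1 : forall n (i : 'I_n.+1), act n 1 i = i;
  csg_actM : forall n (g h : G n) (i : 'I_n.+1), act n (g * h) i = act n g (act n h i);
  csg_simplicial : simplicial_identities face degen;
  csg_faceM : forall n (i : nat) (g h : G n.+1), i <= n.+1 ->
    face n i (g * h) = face n i g * face n (act n.+1 g^-1 (inord i)) h;
  csg_degenM : forall n (i : nat) (g h : G n), i <= n ->
    degen n i (g * h) = degen n i g * degen n (act n g^-1 (inord i)) h
}.

Record csg_morphism (G N : nat -> groupType)
    (actG : forall n, G n -> 'I_n.+1 -> 'I_n.+1)
    (faceG : forall n, nat -> G n.+1 -> G n)
    (degenG : forall n, nat -> G n -> G n.+1)
    (actN : forall n, N n -> 'I_n.+1 -> 'I_n.+1)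
    (faceN : forall n, nat -> N n.+1 -> N n)
    (degenN : forall n, nat -> N n -> N n.+1)
    (pi : forall n, G n -> N n) : Prop := CsgMorphism {
  csgm_mul : forall n (g h : G n), pi n (g * h) = pi n g * pi n h;
  csgm_face : forall n i (g : G n.+1), i <= n.+1 -> pi n (faceG n i g) = faceN n i (pi n.+1 g);
  csgm_degen : forall n i (g : G n), i <= n -> pi n.+1 (degenG n i g) = degenN n i (pi n g);
  csgm_act : forall n (g : G n) (i : 'I_n.+1), actN n (pi n g) i = actG n g i
}.

(* The action groupoid Gamma_n = G_n // P_n (P_n = ker pi_n).  Its objects
   are the elements sigma of N_n = G_n/P_n; a morphism [sigma, f] (f in G_n)
   is represented by the pair (sigma, f), with source sigma and target
   sigma * pi(f)^{-1}. *)
Unset Implicit Arguments.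
Section ActionGroupoid.
Variables (G N : nat -> groupType) (pi : forall n, G n -> N n).
Variable (actN : forall n, N n -> 'I_n.+1 -> 'I_n.+1).
Variables (faceG : forall n, nat -> G n.+1 -> G n) (degenG : forall n, nat -> G n -> G n.+1).
Variables (faceN : forall n, nat -> N n.+1 -> N n) (degenN : forall n, nat -> N n -> N n.+1).

Definition Gamma_mor (n : nat) : Type := (N n * G n)%type.

Definition Gamma_src n (m : Gamma_mor n) : N n := m.1.
Definition Gamma_tgt n (m : Gamma_mor n) : N n := m.1 * (pi n m.2)^-1.
Definition Gamma_id n (s : N n) : Gamma_mor n := (s, 1).
Definition Gamma_comp n (m2 m1 : Gamma_mor n) : Gamma_mor n := (m1.1, m2.2 * m1.2).

Definition Gamma_face n (i : nat) (m : Gamma_mor n.+1) : Gamma_mor n :=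
  (faceN n i m.1, (faceG n (actN n.+1 m.1^-1 (inord i)) m.2^-1)^-1).
Definition Gamma_degen n (i : nat) (m : Gamma_mor n) : Gamma_mor n.+1 :=
  (degenN n i m.1, (degenG n (actN n m.1^-1 (inord i)) m.2^-1)^-1).

End ActionGroupoid.
Set Implicit Arguments.

Definition coface (j k : nat) : nat := if k < j then k else k.+1.
Definition codegen (j k : nat) : nat := if k <= j then k else k.-1.

(* Compatibility of the action with faces/degeneracies as in the category
   Delta G (g o delta_{g^{-1}(i)} = delta_i o d_i(g),
             g o sigma_{g^{-1}(i)} = sigma_i o s_i(g), as maps of finite sets).
   This holds for each of the seven basic crossed simplicial groups N_*. *)
Record action_compatible (N : nat -> groupType)
    (act : forall n, N n -> 'I_n.+1 -> 'I_n.+1)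
    (face : forall n, nat -> N n.+1 -> N n)
    (degen : forall n, nat -> N n -> N n.+1) : Prop := ActionCompatible {
  ac_face : forall n (g : N n.+1) (i : nat) (k : 'I_n.+1), i <= n.+1 ->
    (act n.+1 g (inord (coface (act n.+1 g^-1 (inord i)) k)) : nat)
      = coface i (act n (face n i g) k);
  ac_degen : forall n (g : N n) (i : nat) (k : 'I_n.+2), i <= n ->
    (act n g (inord (codegen (act n g^-1 (inord i)) k)) : nat)
      = codegen i (act n.+1 (degen n i g) k)
}.

From mathcomp Require Import all_boot zify.

Local Open Scope group_scope.

(* Write a = sigma^-1(i).  The second component of d_i[sigma, f] is
   d_a(f^-1)^-1, and likewise for s_i, so each simplicial identity for Gamma
   is a simplicial identity for G_* at indices moved by sigma^-1.  The
   compatibility of the N_*-action with cofaces and codegeneracies shows that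
   the moved indices are again related as in the corresponding composite of
   coface and codegeneracy maps.  Functoriality is the
   crossed identity d_a(gh) = d_a(g) d_{g^-1(a)}(h) applied to
   (gf)^-1 = f^-1 g^-1, where f acts on [n] as pi(f) does. *)

Lemma coface_lt j k : k < j -> coface j k = k.
Proof. by rewrite /coface => ->. Qed.

Lemma coface_ge j k : j <= k -> coface j k = k.+1.
Proof. by move=> le_jk; rewrite /coface ltnNge le_jk. Qed.

Lemma coface_neq j k : coface j k != j.
Proof. by rewrite /coface; case: ltnP => h; apply/eqP; lia. Qed.

Lemma codegen_le j k : k <= j -> codegen j k = k.
Proof. by rewrite /codegen => ->. Qed.

Lemma codegen_gt j k : j < k -> codegen j k = k.-1.
Proof. by move=> lt_jk; rewrite /codegen leqNgt lt_jk. Qed.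

(* The hypotheses on the indices say that the composite cosimplicial maps
   agree, e.g. delta_a delta_c = delta_b delta_c'; no order between a and b
   is assumed. *)
Section SimplicialIdentitiesSymmetric.
Context {X : nat -> Type} {face : forall n, nat -> X n.+1 -> X n}
  {degen : forall n, nat -> X n -> X n.+1}.
Hypothesis HX : simplicial_identities face degen.

Lemma face_face_coface n (x : X n.+2) a b c c' :
    a <= n.+2 -> b <= n.+2 -> c <= n.+1 -> c' <= n.+1 ->
    coface a c = b -> coface b c' = a ->
  face n c (face n.+1 a x) = face n c' (face n.+1 b x).
Proof.
wlog lt_ab : a b c c' / a < b => [hwlog ha hb hc hc' Eb Ea|].
  have [lt_ab|lt_ba|eq_ab] := ltngtP a b; first exact: hwlog.
    by symmetry; apply: hwlog.
  by have := coface_neq a c; rewrite Eb eq_ab eqxx.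
move=> ha hb hc hc' Eb Ea.
have [-> ->] : c = b.-1 /\ c' = a.
  by move: Eb Ea; rewrite /coface; case: (ltnP c a); case: (ltnP c' b); lia.
by rewrite [RHS](si_dd HX).
Qed.

Lemma degen_degen_codegen n (x : X n) a b c c' :
    a <= n -> b <= n -> c <= n.+1 -> c' <= n.+1 ->
    codegen a c = b -> codegen b c' = a -> (a, c) != (b, c') ->
  degen n.+1 c (degen n a x) = degen n.+1 c' (degen n b x).
Proof.
wlog lt_ac_bc' : a b c c' / (a < b) || (a == b) && (c < c')
    => [hwlog ha hb hc hc' Eb Ea neq_ac_bc'|].
  have neq_bc'_ac : (b, c') != (a, c) by rewrite eq_sym.
  have [lt_ab|lt_ba|eq_ab] := ltngtP a b; first by apply: hwlog; rewrite ?lt_ab.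
    by symmetry; apply: hwlog; rewrite ?lt_ba.
  rewrite -{}eq_ab in hb Eb Ea neq_ac_bc' neq_bc'_ac *.
  have [lt_cc'|lt_c'c|eq_cc'] := ltngtP c c'.
  - by apply: hwlog; rewrite ?eqxx ?lt_cc' ?orbT.
  - by symmetry; apply: hwlog; rewrite ?eqxx ?lt_c'c ?orbT.
  - by rewrite eq_cc' eqxx in neq_ac_bc'.
move=> ha hb hc hc' Eb Ea _; case/orP: lt_ac_bc' => [lt_ab | /andP[/eqP eq_ab lt_cc']].
  have [-> ->] : c = b.+1 /\ c' = a.
    by move: Eb Ea; rewrite /codegen; case: (leqP c a); case: (leqP c' b); lia.
  by rewrite [RHS](si_ss HX) // ltnW.
have [-> ->] : c = a /\ c' = a.+1.
  by move: Eb Ea; rewrite /codegen; case: (leqP c a); case: (leqP c' b); lia.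
by rewrite -eq_ab (si_ss HX).
Qed.

Lemma face_degen_codegen n (x : X n.+1) a b c c' :
    a <= n.+1 -> b <= n.+1 -> c <= n.+2 -> c' <= n ->
    codegen a c = b -> coface b c' = a ->
  face n.+1 c (degen n.+1 a x) = degen n c' (face n b x).
Proof.
move=> ha hb hc hc' Eb Ea; have [lt_ab|lt_ba|eq_ab] := ltngtP a b.
- have [-> ->] : c = b.+1 /\ c' = a.
    by move: Eb Ea; rewrite /codegen /coface; case: (leqP c a); case: (ltnP c' b); lia.
  by rewrite (si_ds_gt HX).
- have [-> ->] : c = b /\ c' = a.-1.
    by move: Eb Ea; rewrite /codegen /coface; case: (leqP c a); case: (ltnP c' b); lia.
  by rewrite (si_ds_lt HX).
- by have := coface_neq b c'; rewrite Ea eq_ab eqxx.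
Qed.

Lemma face_degen_codegen_id n (x : X n) a c :
  a <= n -> c <= n.+1 -> codegen a c = a -> face n c (degen n a x) = x.
Proof.
move=> ha hc Ea; have [->|->] : c = a \/ c = a.+1.
  by move: Ea; rewrite /codegen; case: (leqP c); lia.
- exact: (si_ds_eq HX).
- exact: (si_ds_eqS HX).
Qed.

End SimplicialIdentitiesSymmetric.

Section CrossedSimplicialGroupTheory.
Context {K : nat -> groupType} {act : forall n, K n -> 'I_n.+1 -> 'I_n.+1}
  {face : forall n, nat -> K n.+1 -> K n} {degen : forall n, nat -> K n -> K n.+1}.
Hypothesis HK : crossed_simplicial_group act face degen.

Lemma face1 n i : i <= n.+1 -> face n i 1 = 1.
Proof.
move=> le_in; apply: (@mulgI _ (face n i 1)).
have := csg_faceM HK (1 : K n.+1) 1 le_in.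
by rewrite mulg1 invg1 (csg_act1 HK) inordK // mulg1 => <-.
Qed.

Lemma degen1 n i : i <= n -> degen n i 1 = 1.
Proof.
move=> le_in; apply: (@mulgI _ (degen n i 1)).
have := csg_degenM HK (1 : K n) 1 le_in.
by rewrite mulg1 invg1 (csg_act1 HK) inordK // mulg1 => <-.
Qed.

Lemma actK {n} (g : K n) : cancel (act n g) (act n g^-1).
Proof. by move=> k; rewrite -(csg_actM HK) mulVg (csg_act1 HK). Qed.

Lemma actKV {n} (g : K n) : cancel (act n g^-1) (act n g).
Proof. by move=> k; rewrite -(csg_actM HK) mulgV (csg_act1 HK). Qed.

Lemma act_inord_inj n (g : K n) x y : x <= n -> y <= n ->
  act n g (inord x) = act n g (inord y) -> x = y.
Proof.
move=> le_xn le_yn /(can_inj (actK g))/(congr1 val).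
by rewrite /= !inordK.
Qed.

Lemma act_inordV n (g : K n) (k : 'I_n.+1) x :
  act n g k = x :> nat -> act n g^-1 (inord x) = k.
Proof. by move=> <-; rewrite inord_val actK. Qed.

End CrossedSimplicialGroupTheory.

Section ActionCompatibleTheory.
Context {N : nat -> groupType} {act : forall n, N n -> 'I_n.+1 -> 'I_n.+1}
  {face : forall n, nat -> N n.+1 -> N n} {degen : forall n, nat -> N n -> N n.+1}.
Hypotheses (HN : crossed_simplicial_group act face degen)
  (HNc : action_compatible act face degen).

Lemma coface_act_face n (s : N n.+1) i x : i <= n.+1 -> x <= n ->
  coface (act n.+1 s^-1 (inord i)) (act n (face n i s)^-1 (inord x))
    = act n.+1 s^-1 (inord (coface i x)).
Proof.
move=> le_in le_xn; set k := act n _ (inord x).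
have := ac_face HNc s k le_in; rewrite (actKV HN) inordK // => /(act_inordV HN) ->.
by rewrite inordK // /coface; case: ifP; have := ltn_ord k; lia.
Qed.

Lemma codegen_act_degen n (s : N n) i x : i <= n -> x <= n.+1 ->
  codegen (act n s^-1 (inord i)) (act n.+1 (degen n i s)^-1 (inord x))
    = act n s^-1 (inord (codegen i x)).
Proof.
move=> le_in le_xn; set k := act n.+1 _ (inord x).
have := ac_degen HNc s k le_in; rewrite (actKV HN) inordK // => /(act_inordV HN) ->.
rewrite inordK // /codegen; have := ltn_ord k; have := ltn_ord (act n s^-1 (inord i)).
by case: ifP; lia.
Qed.

End ActionCompatibleTheory.

Section ActionGroupoidSimplicial.
Context {G N : nat -> groupType}
  {faceG : forall n, nat -> G n.+1 -> G n} {degenG : forall n, nat -> G n -> G n.+1}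
  {actN : forall n, N n -> 'I_n.+1 -> 'I_n.+1}
  {faceN : forall n, nat -> N n.+1 -> N n} {degenN : forall n, nat -> N n -> N n.+1}.
Hypotheses (HSG : simplicial_identities faceG degenG)
  (HN : crossed_simplicial_group actN faceN degenN)
  (HNc : action_compatible actN faceN degenN).

Local Notation Mor := (Gamma_mor G N).
Local Notation d := (Gamma_face G N actN faceG faceN).
Local Notation s := (Gamma_degen G N actN degenG degenN).

Lemma Gamma_face_face n i j (m : Mor n.+2) : i < j -> j <= n.+2 ->
  d n i (d n.+1 j m) = d n j.-1 (d n.+1 i m).
Proof.
case: m => sigma f lt_ij le_jn; rewrite /Gamma_face /= !invgK.
congr (_, _^-1); first exact: (si_dd (csg_simplicial HN)).
apply: (face_face_coface HSG); rewrite ?leq_ord //.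
- by rewrite (coface_act_face HN HNc) ?coface_lt //; lia.
- by rewrite (coface_act_face HN HNc) ?coface_ge ?prednK //; lia.
Qed.

Lemma Gamma_degen_degen n i j (m : Mor n) : i <= j -> j <= n ->
  s n.+1 i (s n j m) = s n.+1 j.+1 (s n i m).
Proof.
case: m => sigma f le_ij le_jn; rewrite /Gamma_degen /= !invgK.
congr (_, _^-1); first exact: (si_ss (csg_simplicial HN)).
apply: (degen_degen_codegen HSG); rewrite ?leq_ord //.
- by rewrite (codegen_act_degen HN HNc) ?codegen_le //; lia.
- by rewrite (codegen_act_degen HN HNc) ?codegen_gt //; lia.
- apply/eqP; case=> /val_inj/(act_inord_inj HN) eq_ji.
  rewrite -{}eq_ji ?(leq_trans le_ij) // => /val_inj/(act_inord_inj HN) eq_jSj.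
  by have := eq_jSj (leqW le_jn) le_jn; lia.
Qed.

Lemma Gamma_face_degen_lt n i j (m : Mor n.+1) : i < j -> j <= n.+1 ->
  d n.+1 i (s n.+1 j m) = s n j.-1 (d n i m).
Proof.
case: m => sigma f lt_ij le_jn; rewrite /Gamma_face /Gamma_degen /= !invgK.
congr (_, _^-1); first exact: (si_ds_lt (csg_simplicial HN)).
apply: (face_degen_codegen HSG); rewrite ?leq_ord //.
- by rewrite (codegen_act_degen HN HNc) ?codegen_le //; lia.
- by rewrite (coface_act_face HN HNc) ?coface_ge ?prednK //; lia.
Qed.

Lemma Gamma_face_degen_gt n i j (m : Mor n.+1) : j.+1 < i -> i <= n.+2 ->
  d n.+1 i (s n.+1 j m) = s n j (d n i.-1 m).
Proof.
case: m => sigma f lt_Sji le_in; rewrite /Gamma_face /Gamma_degen /= !invgK.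
congr (_, _^-1); first exact: (si_ds_gt (csg_simplicial HN)).
apply: (face_degen_codegen HSG); rewrite ?leq_ord //.
- by rewrite (codegen_act_degen HN HNc) ?codegen_gt //; lia.
- by rewrite (coface_act_face HN HNc) ?coface_lt //; lia.
Qed.

Lemma Gamma_face_degen_codegen_id n j k (m : Mor n) :
  j <= n -> k <= n.+1 -> codegen j k = j -> d n k (s n j m) = m.
Proof.
case: m => sigma f le_jn le_kn Ej; rewrite /Gamma_face /Gamma_degen /= !invgK.
rewrite (face_degen_codegen_id (csg_simplicial HN)) //.
rewrite (face_degen_codegen_id HSG) ?invgK ?leq_ord //.
by rewrite (codegen_act_degen HN HNc) // Ej.
Qed.

Lemma Gamma_simplicial : simplicial_identities d s.
Proof.
split.
- exact: Gamma_face_face.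
- exact: Gamma_degen_degen.
- exact: Gamma_face_degen_lt.
- by move=> n j m le_jn; apply: Gamma_face_degen_codegen_id; rewrite ?codegen_le ?(leqW le_jn).
- by move=> n j m le_jn; apply: Gamma_face_degen_codegen_id; rewrite ?codegen_gt.
- exact: Gamma_face_degen_gt.
Qed.

End ActionGroupoidSimplicial.

Lemma morph_invg (A B : groupType) (f : A -> B) :
  {morph f : x y / x * y} -> {morph f : x / x^-1}.
Proof.
move=> fM x; have f1 : f 1 = 1 by apply: (mulgI (f 1)); rewrite -fM !mulg1.
by apply/esym/mulg1_eq; rewrite -fM mulgV.
Qed.

Section ActionGroupoidFunctors.
Context {G N : nat -> groupType} { pi : forall n, G n -> N n}
  {actG : forall n, G n -> 'I_n.+1 -> 'I_n.+1}
  {faceG : forall n, nat -> G n.+1 -> G n} {degenG : forall n, nat -> G n -> G n.+1}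
  {actN : forall n, N n -> 'I_n.+1 -> 'I_n.+1}
  {faceN : forall n, nat -> N n.+1 -> N n} {degenN : forall n, nat -> N n -> N n.+1}.
Hypotheses (HG : crossed_simplicial_group actG faceG degenG)
  (HN : crossed_simplicial_group actN faceN degenN)
  (Hpi : csg_morphism actG faceG degenG actN faceN degenN pi).

Local Notation Mor := (Gamma_mor G N).
Local Notation src := (Gamma_src G N).
Local Notation tgt := (Gamma_tgt G N pi).
Local Notation idm := (Gamma_id G N).
Local Notation comp := (Gamma_comp G N).
Local Notation d := (Gamma_face G N actN faceG faceN).
Local Notation s := (Gamma_degen G N actN degenG degenN).

Let piV n : {morph pi n : x / x^-1}.
Proof. exact/morph_invg/(csgm_mul Hpi). Qed.

Lemma Gamma_face_tgt n i (m : Mor n.+1) : i <= n.+1 ->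
  tgt n (d n i m) = faceN n i (tgt n.+1 m).
Proof.
case: m => sigma f le_in; rewrite /Gamma_tgt /= (csg_faceM HN) //.
by rewrite piV invgK (csgm_face Hpi) ?piV ?leq_ord.
Qed.

Lemma Gamma_degen_tgt n i (m : Mor n) : i <= n ->
  tgt n.+1 (s n i m) = degenN n i (tgt n m).
Proof.
case: m => sigma f le_in; rewrite /Gamma_tgt /= (csg_degenM HN) //.
by rewrite piV invgK (csgm_degen Hpi) ?piV ?leq_ord.
Qed.

Lemma Gamma_face_id n i (sigma : N n.+1) : d n i (idm n.+1 sigma) = idm n (faceN n i sigma).
Proof. by rewrite /Gamma_face /= invg1 (face1 HG) ?invg1 ?leq_ord. Qed.

Lemma Gamma_degen_id n i (sigma : N n) : s n i (idm n sigma) = idm n.+1 (degenN n i sigma).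
Proof. by rewrite /Gamma_degen /= invg1 (degen1 HG) ?invg1 ?leq_ord. Qed.

Lemma Gamma_face_comp n i (m2 m1 : Mor n.+1) : src n.+1 m2 = tgt n.+1 m1 ->
  d n i (comp n.+1 m2 m1) = comp n (d n i m2) (d n i m1).
Proof.
case: m2 m1 => [sigma2 g] [sigma1 f]; rewrite /Gamma_tgt /= => ->; congr pair => /=.
rewrite invgM (csg_faceM HG) ?leq_ord // invgM invgK inord_val.
by rewrite -(csgm_act Hpi) -(csg_actM HN) invgM invgK.
Qed.

Lemma Gamma_degen_comp n i (m2 m1 : Mor n) : src n m2 = tgt n m1 ->
  s n i (comp n m2 m1) = comp n.+1 (s n i m2) (s n i m1).
Proof.
case: m2 m1 => [sigma2 g] [sigma1 f]; rewrite /Gamma_tgt /= => ->; congr pair => /=.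
rewrite invgM (csg_degenM HG) ?leq_ord // invgM invgK inord_val.
by rewrite -(csgm_act Hpi) -(csg_actM HN) invgM invgK.
Qed.

End ActionGroupoidFunctors.

Theorem lemma1p8
    (G N : nat -> groupType)
    (actG : forall n, G n -> 'I_n.+1 -> 'I_n.+1)
    (faceG : forall n, nat -> G n.+1 -> G n)
    (degenG : forall n, nat -> G n -> G n.+1)
    (actN : forall n, N n -> 'I_n.+1 -> 'I_n.+1)
    (faceN : forall n, nat -> N n.+1 -> N n)
    (degenN : forall n, nat -> N n -> N n.+1)
    (pi : forall n, G n -> N n)
    (HG : crossed_simplicial_group actG faceG degenG)
    (HN : crossed_simplicial_group actN faceN degenN)
    (HNc : action_compatible actN faceN degenN)
    (Hpi : csg_morphism actG faceG degenG actN faceN degenN pi)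
    (Hsurj : forall n (s : N n), exists g : G n, pi n g = s) :
  let Mor := Gamma_mor G N in
  let src := Gamma_src G N in
  let tgt := Gamma_tgt G N pi in
  let idm := Gamma_id G N in
  let comp := Gamma_comp G N in
  let d := Gamma_face G N actN faceG faceN in
  let s := Gamma_degen G N actN degenG degenN in
  (* each d_i : Gamma_{n+1} -> Gamma_n (0 <= i <= n+1) is a functor *)
  (forall n i, i <= n.+1 ->
     (forall m : Mor n.+1,
        src n (d n i m) = faceN n i (src n.+1 m) /\
        tgt n (d n i m) = faceN n i (tgt n.+1 m)) /\
     (forall sigma : N n.+1, d n i (idm n.+1 sigma) = idm n (faceN n i sigma)) /\
     (forall m2 m1 : Mor n.+1, src n.+1 m2 = tgt n.+1 m1 ->
        d n i (comp n.+1 m2 m1) = comp n (d n i m2) (d n i m1))) /\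
  (* each s_i : Gamma_n -> Gamma_{n+1} (0 <= i <= n) is a functor *)
  (forall n i, i <= n ->
     (forall m : Mor n,
        src n.+1 (s n i m) = degenN n i (src n m) /\
        tgt n.+1 (s n i m) = degenN n i (tgt n m)) /\
     (forall sigma : N n, s n i (idm n sigma) = idm n.+1 (degenN n i sigma)) /\
     (forall m2 m1 : Mor n, src n m2 = tgt n m1 ->
        s n i (comp n m2 m1) = comp n.+1 (s n i m2) (s n i m1))) /\
  (* the simplicial identities, on objects and on morphisms *)
  simplicial_identities faceN degenN /\
  simplicial_identities (X := Mor) d s.
Proof.
move=> Mor src tgt idm comp d s.
split; [|split; [|split]].
- move=> n i le_in; split; [|split].
  + by move=> m; split; last exact: Gamma_face_tgt HN Hpi n i m le_in.
  + exact: Gamma_face_id HG n i.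
  + exact: Gamma_face_comp HG HN Hpi n i.
- move=> n i le_in; split; [|split].
  + by move=> m; split; last exact: Gamma_degen_tgt HN Hpi n i m le_in.
  + exact: Gamma_degen_id HG n i.
  + exact: Gamma_degen_comp HG HN Hpi n i.
- exact: csg_simplicial HN.
- exact: Gamma_simplicial (csg_simplicial HG) HN HNc.
Qed.
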